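(* Under the standing assumptions for the $M=1$ system (see context), the following identities hold for all $s>0$: (i) $\xi_1=\eta_0-e_1$; (ii) $x_0y_0+x_1y_1=0$; (iii) $\eta_1+\xi_0=e_2$; (iv) $s\,x_0y_1=-\eta_0\xi_1+\eta_0+\xi_0-\eta_1-e_2$; (v) $\eta_0x_0y_0+(\eta_1-\xi_0-s)x_0y_1+x_1y_0-\xi_1x_1y_1+\eta_0=0$.
   Context: Fix complex parameters $\nu_0,\nu_1$ and put $e_1=\nu_0+\nu_1$, $e_2=\nu_0\nu_1$. Let $x_0,x_1,y_0,y_1,\xi_0,\xi_1,\eta_0,\eta_1$ be smooth complex-valued functions of $s\in(0,\infty)$ satisfying, with $'=d/ds$, the system $s x_0'=-\eta_0x_0-x_1$, $s x_1'=-\eta_1x_0+sx_0+\xi_0x_0+\xi_1x_1$, $s y_1'=-\xi_1y_1+y_0$, $s y_0'=-\xi_0y_1-sy_1+\eta_0y_0+\eta_1y_1$, $\xi_0'=x_0y_0$, $\xi_1'=x_0y_1$, $\eta_0'=x_0y_1$, $\eta_1'=x_1y_1$, together with the boundary behaviour as $s\to0^+$: $\xi_0\to e_2$, $\xi_1\to-e_1$, $\eta_0\to0$, $\eta_1\to0$, and $x_j(s)y_k(s)\to0$ for all $j,k\in\{0,1\}$. (These are the variables of Strahov's Hamiltonian system describing the gap probability of the $M=1$ hard-edge kernel on $(0,s)$, with Hamiltonian $H=-\eta_0x_0y_0+(\xi_0-\eta_1+s)x_0y_1-x_1y_0+\xi_1x_1y_1$ and gap probability $\exp\int_0^s\eta_0(t)\,dt/t$.)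 *)

From Stdlib Require Export Reals.
Open Scope R_scope.

(* Complex numbers as (real part, imaginary part). *)
Definition Cpx : Type := (R * R)%type.
Definition Cadd (z w : Cpx) : Cpx := (fst z + fst w, snd z + snd w).
Definition Copp (z : Cpx) : Cpx := (- fst z, - snd z).
Definition Csub (z w : Cpx) : Cpx := Cadd z (Copp w).
Definition Cmul (z w : Cpx) : Cpx :=
  (fst z * fst w - snd z * snd w, fst z * snd w + snd z * fst w).
Definition CofR (r : R) : Cpx := (r, 0).
Definition C0 : Cpx := (0, 0).

Infix "+c" := Cadd (at level 50, left associativity).
Infix "-c" := Csub (at level 50, left associativity).
Infix "*c" := Cmul (at level 40, left associativity).
Notation "-c z" := (Copp z) (at level 35, right associativity).

Definition Cderiv (f : R -> Cpx) (s : R) (d : Cpx) : Prop :=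
  derivable_pt_lim (fun t => fst (f t)) s (fst d) /\
  derivable_pt_lim (fun t => snd (f t)) s (snd d).

Definition Clim0 (f : R -> Cpx) (l : Cpx) : Prop :=
  forall eps, 0 < eps -> exists delta, 0 < delta /\
    forall s, 0 < s < delta ->
      Rabs (fst (f s) - fst l) < eps /\ Rabs (snd (f s) - snd l) < eps.

(* Each of the five identities says that some polynomial Q in s and the unknowns is
   constant: differentiating Q and substituting the equations of motion gives
   Q' = 0 on (0, oo) (for (iii), Q' = x0 y0 + x1 y1, which vanishes by (ii)), and the
   boundary behaviour at 0+ identifies the constant. *)

From Stdlib Require Import Reals Lra Field.
From Coquelicot Require Complex.
Open Scope R_scope.

Lemma eq_of_derive0 (g : R -> R) (a b : R) :
  a <= b -> (forall c, a <= c <= b -> derivable_pt_lim g c 0) -> g a = g b.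
Proof.
  intros hab Hd.
  destruct (Rle_lt_or_eq_dec _ _ hab) as [hlt | ->]; [|reflexivity].
  destruct (MVT_cor2 g (fun _ => 0) a b hlt Hd) as [c [Hc _]].
  lra.
Qed.

Lemma eq_lim0_of_derive0 (g : R -> R) (l : R) :
  (forall t, 0 < t -> derivable_pt_lim g t 0) ->
  limit1_in g (fun t => 0 < t) l 0 ->
  forall s, 0 < s -> g s = l.
Proof.
  intros Hd Hl s hs; apply cond_eq; intros eps he.
  destruct (Hl eps he) as [delta [hdelta Hdelta]].
  pose proof (Rmin_l (delta / 2) s) as htd; pose proof (Rmin_r (delta / 2) s) as hts.
  set (t := Rmin (delta / 2) s) in *.
  assert (ht : 0 < t) by (apply Rmin_glb_lt; lra).
  rewrite <- (eq_of_derive0 g t s hts) by (intros c hc; apply Hd; lra).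
  apply Hdelta; split; [exact ht|].
  simpl; unfold R_dist; rewrite Rminus_0_r, Rabs_pos_eq; lra.
Qed.

Lemma Cpx_ext (z w : Cpx) : fst z = fst w -> snd z = snd w -> z = w.
Proof. destruct z, w; simpl; intros -> ->; reflexivity. Qed.

Definition Cinv (z : Cpx) : Cpx := Complex.Cinv z.
Definition Cdiv (z w : Cpx) : Cpx := z *c Cinv w.
Infix "/c" := Cdiv (at level 40, left associativity).

(* [Cpx] and its operations are convertible to Coquelicot's complex numbers. *)
Lemma Cpx_field_theory : field_theory C0 (1, 0) Cadd Cmul Csub Copp Cdiv Cinv eq.
Proof. exact Complex.C_field_theory. Qed.

Add Field Cpx_field : Cpx_field_theory.

Lemma CofR_neq0 (r : R) : r <> 0 -> CofR r <> C0.
Proof. intros hr E; apply hr; exact (f_equal fst E). Qed.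

Lemma Cpx_eq_of_sub_eq0 (z w : Cpx) : z -c w = C0 -> z = w.
Proof.
  intros E; transitivity ((z -c w) +c w); [ring|].
  rewrite E; ring.
Qed.

Lemma Cderiv_eq f s d d' : Cderiv f s d -> d = d' -> Cderiv f s d'.
Proof. intros H <-; exact H. Qed.

Lemma Cderiv_add f g s df dg : Cderiv f s df -> Cderiv g s dg ->
  Cderiv (fun t => f t +c g t) s (df +c dg).
Proof.
  intros [A B] [C D]; split; [exact (derivable_pt_lim_plus _ _ _ _ _ A C)
                              | exact (derivable_pt_lim_plus _ _ _ _ _ B D)].
Qed.

Lemma Cderiv_opp f s df : Cderiv f s df -> Cderiv (fun t => -c f t) s (-c df).
Proof.
  intros [A B]; split; [exact (derivable_pt_lim_opp _ _ _ A)
                        | exact (derivable_pt_lim_opp _ _ _ B)].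
Qed.

Lemma Cderiv_sub f g s df dg : Cderiv f s df -> Cderiv g s dg ->
  Cderiv (fun t => f t -c g t) s (df -c dg).
Proof. intros A B; apply Cderiv_add; [exact A | exact (Cderiv_opp _ _ _ B)]. Qed.

Lemma Cderiv_mul f g s df dg : Cderiv f s df -> Cderiv g s dg ->
  Cderiv (fun t => f t *c g t) s (df *c g s +c f s *c dg).
Proof.
  intros [A B] [C D]; split.
  - replace (fst (df *c g s +c f s *c dg))
      with (fst df * fst (g s) + fst (f s) * fst dg
            - (snd df * snd (g s) + snd (f s) * snd dg)) by (simpl; ring).
    exact (derivable_pt_lim_minus _ _ _ _ _ (derivable_pt_lim_mult _ _ _ _ _ A C)
                                            (derivable_pt_lim_mult _ _ _ _ _ B D)).
  - replace (snd (df *c g s +c f s *c dg))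
      with (fst df * snd (g s) + fst (f s) * snd dg
            + (snd df * fst (g s) + snd (f s) * fst dg)) by (simpl; ring).
    exact (derivable_pt_lim_plus _ _ _ _ _ (derivable_pt_lim_mult _ _ _ _ _ A D)
                                           (derivable_pt_lim_mult _ _ _ _ _ B C)).
Qed.

Lemma Cderiv_const (c : Cpx) s : Cderiv (fun _ => c) s C0.
Proof. split; apply derivable_pt_lim_const. Qed.

Lemma Cderiv_CofR s : Cderiv CofR s (1, 0).
Proof. split; [apply derivable_pt_lim_id | apply derivable_pt_lim_const]. Qed.

Lemma Cderiv_of_scaled f s r : 0 < s ->
  (exists d, Cderiv f s d /\ CofR s *c d = r) -> Cderiv f s (r /c CofR s).
Proof.
  intros hs [d [Hd <-]]; apply (Cderiv_eq _ _ _ _ Hd).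
  field; apply CofR_neq0; lra.
Qed.

Lemma Clim0_iff F L : Clim0 F L <->
  limit1_in (fun t => fst (F t)) (fun t => 0 < t) (fst L) 0 /\
  limit1_in (fun t => snd (F t)) (fun t => 0 < t) (snd L) 0.
Proof.
  unfold limit1_in, limit_in; simpl; unfold R_dist; split.
  - intros H; split; intros eps he; destruct (H eps he) as [d [hd Hd]];
      exists d; split; auto; intros x [hx1 hx2];
      rewrite Rminus_0_r, Rabs_pos_eq in hx2 by lra; apply Hd; lra.
  - intros [H1 H2] eps he.
    destruct (H1 eps he) as [d1 [hd1 Hd1]], (H2 eps he) as [d2 [hd2 Hd2]].
    exists (Rmin d1 d2); split; [apply Rmin_glb_lt; lra|].
    intros s hs; pose proof (Rmin_l d1 d2); pose proof (Rmin_r d1 d2).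
    split; [apply Hd1 | apply Hd2]; rewrite Rminus_0_r, Rabs_pos_eq; lra.
Qed.

Lemma Cpx_eq_lim0_of_derive0 (F : R -> Cpx) (L : Cpx) :
  (forall t, 0 < t -> Cderiv F t C0) -> Clim0 F L -> forall s, 0 < s -> F s = L.
Proof.
  rewrite Clim0_iff; intros Hd [Hl1 Hl2] s hs.
  apply Cpx_ext; [apply (eq_lim0_of_derive0 (fun t => fst (F t)))
                 | apply (eq_lim0_of_derive0 (fun t => snd (F t)))];
    auto; intros t ht; apply (Hd t ht).
Qed.

Lemma Cpx_eq_of_conserved (F G : R -> Cpx) :
  (forall t, 0 < t -> Cderiv (fun s => F s -c G s) t C0) ->
  Clim0 (fun s => F s -c G s) C0 ->
  forall s, 0 < s -> F s = G s.
Proof.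
  intros Hd Hl s hs; apply Cpx_eq_of_sub_eq0.
  exact (Cpx_eq_lim0_of_derive0 _ _ Hd Hl s hs).
Qed.

Lemma Clim0_eq F l l' : Clim0 F l -> l = l' -> Clim0 F l'.
Proof. intros H <-; exact H. Qed.

Lemma Clim0_add f g l m : Clim0 f l -> Clim0 g m -> Clim0 (fun t => f t +c g t) (l +c m).
Proof.
  rewrite !Clim0_iff; intros [A B] [C D]; split;
    [exact (limit_plus _ _ _ _ _ _ A C) | exact (limit_plus _ _ _ _ _ _ B D)].
Qed.

Lemma Clim0_opp f l : Clim0 f l -> Clim0 (fun t => -c f t) (-c l).
Proof.
  rewrite !Clim0_iff; intros [A B]; split;
    [exact (limit_Ropp _ _ _ _ A) | exact (limit_Ropp _ _ _ _ B)].
Qed.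

Lemma Clim0_sub f g l m : Clim0 f l -> Clim0 g m -> Clim0 (fun t => f t -c g t) (l -c m).
Proof. intros A B; apply Clim0_add; [exact A | exact (Clim0_opp _ _ B)]. Qed.

Lemma Clim0_mul f g l m : Clim0 f l -> Clim0 g m -> Clim0 (fun t => f t *c g t) (l *c m).
Proof.
  rewrite !Clim0_iff; intros [A B] [C D]; split.
  - exact (limit_minus _ _ _ _ _ _ (limit_mul _ _ _ _ _ _ A C) (limit_mul _ _ _ _ _ _ B D)).
  - exact (limit_plus _ _ _ _ _ _ (limit_mul _ _ _ _ _ _ A D) (limit_mul _ _ _ _ _ _ B C)).
Qed.

Lemma Clim0_const (c : Cpx) : Clim0 (fun _ => c) c.
Proof.
  intros eps he; exists 1; split; [lra|].
  intros; rewrite !Rminus_diag, !Rabs_R0; lra.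
Qed.

Lemma Clim0_CofR : Clim0 CofR C0.
Proof.
  intros eps he; exists eps; split; [exact he|]; intros s hs; simpl.
  rewrite !Rminus_0_r, Rabs_R0, Rabs_pos_eq; lra.
Qed.

Ltac Cderiv_rules :=
  repeat match goal with
  | |- Cderiv (fun t => @?f t +c @?g t) _ _ => eapply Cderiv_add
  | |- Cderiv (fun t => @?f t -c @?g t) _ _ => eapply Cderiv_sub
  | |- Cderiv (fun t => -c @?f t) _ _ => eapply Cderiv_opp
  | |- Cderiv (fun t => @?f t *c @?g t) _ _ => eapply Cderiv_mul
  | |- Cderiv CofR _ _ => apply Cderiv_CofR
  | |- Cderiv (fun _ => ?c) _ _ => apply Cderiv_const
  | |- _ => eassumption
  end.

Ltac Clim0_rules :=
  repeat match goal with
  | |- _ => eassumption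
  | |- Clim0 (fun t => @?f t +c @?g t) _ => eapply Clim0_add
  | |- Clim0 (fun t => @?f t -c @?g t) _ => eapply Clim0_sub
  | |- Clim0 (fun t => -c @?f t) _ => eapply Clim0_opp
  | |- Clim0 (fun t => @?f t *c @?g t) _ => eapply Clim0_mul
  | |- Clim0 CofR _ => apply Clim0_CofR
  | |- Clim0 (fun _ => ?c) _ => apply Clim0_const
  end.

Section StrahovSystem.

Variables (nu0 nu1 : Cpx) (x0 x1 y0 y1 xi0 xi1 eta0 eta1 : R -> Cpx).

Hypothesis Hx0 : forall s, 0 < s -> exists d, Cderiv x0 s d /\
  CofR s *c d = (-c (eta0 s *c x0 s)) -c x1 s.
Hypothesis Hx1 : forall s, 0 < s -> exists d, Cderiv x1 s d /\
  CofR s *c d = (-c (eta1 s *c x0 s)) +c CofR s *c x0 s +c xi0 s *c x0 s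
                +c xi1 s *c x1 s.
Hypothesis Hy1 : forall s, 0 < s -> exists d, Cderiv y1 s d /\
  CofR s *c d = (-c (xi1 s *c y1 s)) +c y0 s.
Hypothesis Hy0 : forall s, 0 < s -> exists d, Cderiv y0 s d /\
  CofR s *c d = (-c (xi0 s *c y1 s)) -c CofR s *c y1 s +c eta0 s *c y0 s
                +c eta1 s *c y1 s.
Hypothesis Hxi0 : forall s, 0 < s -> Cderiv xi0 s (x0 s *c y0 s).
Hypothesis Hxi1 : forall s, 0 < s -> Cderiv xi1 s (x0 s *c y1 s).
Hypothesis Heta0 : forall s, 0 < s -> Cderiv eta0 s (x0 s *c y1 s).
Hypothesis Heta1 : forall s, 0 < s -> Cderiv eta1 s (x1 s *c y1 s).

Hypothesis Bxi0 : Clim0 xi0 (nu0 *c nu1).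
Hypothesis Bxi1 : Clim0 xi1 (-c (nu0 +c nu1)).
Hypothesis Beta0 : Clim0 eta0 C0.
Hypothesis Beta1 : Clim0 eta1 C0.
Hypothesis B00 : Clim0 (fun s => x0 s *c y0 s) C0.
Hypothesis B01 : Clim0 (fun s => x0 s *c y1 s) C0.
Hypothesis B10 : Clim0 (fun s => x1 s *c y0 s) C0.
Hypothesis B11 : Clim0 (fun s => x1 s *c y1 s) C0.

Ltac flow_at t ht :=
  pose proof (Cderiv_of_scaled _ _ _ ht (Hx0 t ht));
  pose proof (Cderiv_of_scaled _ _ _ ht (Hx1 t ht));
  pose proof (Cderiv_of_scaled _ _ _ ht (Hy0 t ht));
  pose proof (Cderiv_of_scaled _ _ _ ht (Hy1 t ht));
  pose proof (Hxi0 t ht); pose proof (Hxi1 t ht);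
  pose proof (Heta0 t ht); pose proof (Heta1 t ht).

Ltac conserved s :=
  revert s; apply Cpx_eq_of_conserved; cbv beta;
  [ intros t ht; flow_at t ht; eapply Cderiv_eq; [Cderiv_rules|]; cbv beta;
    field; apply CofR_neq0; lra
  | eapply Clim0_eq; [Clim0_rules | cbv beta; ring] ].

Lemma xi1_eq_eta0_sub s : 0 < s -> xi1 s = eta0 s -c (nu0 +c nu1).
Proof. conserved s. Qed.

Lemma x0y0_add_x1y1 s : 0 < s -> x0 s *c y0 s +c x1 s *c y1 s = C0.
Proof. conserved s. Qed.

Lemma eta1_add_xi0 s : 0 < s -> eta1 s +c xi0 s = nu0 *c nu1.
Proof.
  revert s; apply Cpx_eq_of_conserved; cbv beta.
  - intros t ht; pose proof (Heta1 t ht); pose proof (Hxi0 t ht).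
    eapply Cderiv_eq; [Cderiv_rules|].
    transitivity (x0 t *c y0 t +c x1 t *c y1 t); [ring | exact (x0y0_add_x1y1 t ht)].
  - eapply Clim0_eq; [Clim0_rules | ring].
Qed.

Lemma scaled_x0y1_eq s : 0 < s -> CofR s *c (x0 s *c y1 s) =
  (-c (eta0 s *c xi1 s)) +c eta0 s +c xi0 s -c eta1 s -c nu0 *c nu1.
Proof. conserved s. Qed.

Definition hamiltonian s : Cpx :=
  (-c (eta0 s *c (x0 s *c y0 s))) +c (xi0 s -c eta1 s +c CofR s) *c (x0 s *c y1 s)
  -c x1 s *c y0 s +c xi1 s *c (x1 s *c y1 s).

Lemma hamiltonian_eq_eta0 s : 0 < s -> hamiltonian s = eta0 s.
Proof. unfold hamiltonian; conserved s. Qed.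

End StrahovSystem.

Theorem mainTheorem1
  (nu0 nu1 : Cpx)
  (x0 x1 y0 y1 xi0 xi1 eta0 eta1 : R -> Cpx)
  (Hx0 : forall s, 0 < s -> exists d, Cderiv x0 s d /\
     CofR s *c d = (-c (eta0 s *c x0 s)) -c x1 s)
  (Hx1 : forall s, 0 < s -> exists d, Cderiv x1 s d /\
     CofR s *c d = (-c (eta1 s *c x0 s)) +c CofR s *c x0 s +c xi0 s *c x0 s
                   +c xi1 s *c x1 s)
  (Hy1 : forall s, 0 < s -> exists d, Cderiv y1 s d /\
     CofR s *c d = (-c (xi1 s *c y1 s)) +c y0 s)
  (Hy0 : forall s, 0 < s -> exists d, Cderiv y0 s d /\
     CofR s *c d = (-c (xi0 s *c y1 s)) -c CofR s *c y1 s +c eta0 s *c y0 s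
                   +c eta1 s *c y1 s)
  (Hxi0 : forall s, 0 < s -> Cderiv xi0 s (x0 s *c y0 s))
  (Hxi1 : forall s, 0 < s -> Cderiv xi1 s (x0 s *c y1 s))
  (Heta0 : forall s, 0 < s -> Cderiv eta0 s (x0 s *c y1 s))
  (Heta1 : forall s, 0 < s -> Cderiv eta1 s (x1 s *c y1 s))
  (Bxi0 : Clim0 xi0 (nu0 *c nu1))
  (Bxi1 : Clim0 xi1 (-c (nu0 +c nu1)))
  (Beta0 : Clim0 eta0 C0)
  (Beta1 : Clim0 eta1 C0)
  (B00 : Clim0 (fun s => x0 s *c y0 s) C0)
  (B01 : Clim0 (fun s => x0 s *c y1 s) C0)
  (B10 : Clim0 (fun s => x1 s *c y0 s) C0)
  (B11 : Clim0 (fun s => x1 s *c y1 s) C0) :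
  let e1 := nu0 +c nu1 in
  let e2 := nu0 *c nu1 in
  forall s, 0 < s ->
    xi1 s = eta0 s -c e1 /\
    x0 s *c y0 s +c x1 s *c y1 s = C0 /\
    eta1 s +c xi0 s = e2 /\
    CofR s *c (x0 s *c y1 s) =
      (-c (eta0 s *c xi1 s)) +c eta0 s +c xi0 s -c eta1 s -c e2 /\
    eta0 s *c x0 s *c y0 s +c (eta1 s -c xi0 s -c CofR s) *c x0 s *c y1 s
      +c x1 s *c y0 s -c xi1 s *c x1 s *c y1 s +c eta0 s = C0.
Proof.
  intros e1 e2 s hs; split; [|split; [|split; [|split]]].
  - eapply xi1_eq_eta0_sub; eassumption.
  - eapply x0y0_add_x1y1; eassumption.
  - eapply eta1_add_xi0; eassumption.
  - eapply scaled_x0y1_eq; eassumption.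
  - transitivity (eta0 s -c hamiltonian x0 x1 y0 y1 xi0 xi1 eta0 eta1 s).
    + unfold hamiltonian; ring.
    + erewrite hamiltonian_eq_eta0 by eassumption; ring.
Qed.
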